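(* Let $H$ be a $3$-graph, $K_H=3v(H)^3$, let $\varepsilon\le 1/5$ and $C\ge 1$ be constants. Then there is $n_0$ such that the following holds for all $n\ge n_0$. Let $G$ be a $3$-partite $3$-graph with vertex classes $X,Y,Z$ each of size $n$, and let $\mathcal{L}$ be a bipartite graph between $X$ and $Y$ with exactly $(C/2)n^{2-\varepsilon}$ edges, such that the number of $H$-forbidden $4$-cycles (with respect to $G$) contained in $\mathcal{L}$ is at most $K_H\, n^{3+1/5-\varepsilon}$. Then there is a subset $Y'\subseteq Y$ with $|Y'|\ge n^{1-\varepsilon}/4$ such that (1) at most $(400/C)\binom{|Y'|}{2}$ pairs of vertices of $Y'$ are bad, and (2) at most $(600/C)\binom{|Y'|}{3}$ triples of vertices of $Y'$ are bad.
   Context: A $3$-graph is a $3$-uniform hypergraph; $v(\cdot)$ denotes the number of vertices. $G$ is $3$-partite with classes $X,Y,Z$: every edge contains exactly one vertex of each class. For $z\in Z$, the link graph $\mathcal{L}_z$ is the bipartite graph between $X$ and $Y$ with edges the pairs $xy$ such that $\{x,y,z\}$ is an edge of $G$. A $4$-cycle between $X$ and $Y$ is a $4$-cycle in the complete bipartite graph on $X\cup Y$; it is the boundary of a $4$-disk with centre $z\in Z$ exactly when it is contained in $\mathcal{L}_z$. With $K_H=3v(H)^3$, such a $4$-cycle is $H$-forbidden if the number of $z\in Z$ with the cycle contained in $\mathcal{L}_z$ is at most $K_H$, and $H$-admissible otherwise. For a set $S$ of vertices, $\Gamma(S)$ denotes the set of common neighbours of $S$ in the bipartite graph $\mathcal{L}$;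 $\Gamma(y_1,y_2)=\Gamma(\{y_1,y_2\})$ etc. A pair $y_1y_2$ of distinct vertices of $Y$ is good if $|\Gamma(y_1,y_2)|\ge n^{1-2\varepsilon}$ and the number of $H$-forbidden $4$-cycles in $\mathcal{L}$ containing both $y_1$ and $y_2$ is at most $(K_H/C)\,n^{1-3\varepsilon}\,|\Gamma(y_1,y_2)|$; otherwise it is bad. A triple $y_1y_2y_3$ of distinct vertices of $Y$ is good if $|\Gamma(y_1,y_2,y_3)|\ge n^{1-3\varepsilon}$, and bad otherwise. *)

From Stdlib Require Import Reals.
From mathcomp Require Import all_boot.

Set Implicit Arguments.
Unset Strict Implicit.
Unset Printing Implicit Defensive.

(* The three vertex classes X, Y, Z are each modelled by 'I_n.
   A 3-partite 3-graph G with classes X,Y,Z is a set of triples (x,y,z).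
   A bipartite graph L between X and Y is a set of pairs (x,y). *)

Definition Rleb (a b : R) : bool := if Rle_dec a b then true else false.
Definition Rltb (a b : R) : bool := if Rlt_dec a b then true else false.

Definition npow (n : nat) (a : R) : R := Rpower (INR n) a.

Definition uniform3 (VH : finType) (EH : {set {set VH}}) : Prop :=
  forall e, e \in EH -> #|e| = 3.

Definition KH (VH : finType) : nat := 3 * #|VH| ^ 3.

Definition link n (G : {set 'I_n * 'I_n * 'I_n}) (z : 'I_n) : {set 'I_n * 'I_n} :=
  [set p | (p.1, p.2, z) \in G].

(* A 4-cycle between X and Y in the complete bipartite graph is determined by
   its two X-vertices and its two Y-vertices. *)
Definition is_c4 n (c : {set 'I_n} * {set 'I_n}) : bool :=
  (#|c.1| == 2) && (#|c.2| == 2).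

Definition c4_in n (A : {set 'I_n * 'I_n}) (c : {set 'I_n} * {set 'I_n}) : bool :=
  [forall x in c.1, forall y in c.2, (x, y) \in A].

(* number of z in Z whose link graph contains c (number of 4-disks with boundary c) *)
Definition disk_count n (G : {set 'I_n * 'I_n * 'I_n}) (c : {set 'I_n} * {set 'I_n}) : nat :=
  #|[set z | c4_in (link G z) c]|.

(* H-forbidden: at most K disks (K = K_H) *)
Definition forbidden n (K : nat) (G : {set 'I_n * 'I_n * 'I_n}) c : bool :=
  disk_count G c <= K.

Definition forb_cycles n (K : nat) (G : {set 'I_n * 'I_n * 'I_n}) (L : {set 'I_n * 'I_n}) :
  {set {set 'I_n} * {set 'I_n}} :=
  [set c | [&& is_c4 c, c4_in L c & forbidden K G c]].

Definition Gamma n (L : {set 'I_n * 'I_n}) (S : {set 'I_n}) : {set 'I_n} :=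
  [set x | [forall y in S, (x, y) \in L]].

Definition good_pair n (K : nat) (C eps : R) (G : {set 'I_n * 'I_n * 'I_n})
  (L : {set 'I_n * 'I_n}) (P : {set 'I_n}) : bool :=
  Rleb (npow n (1 - 2 * eps)) (INR #|Gamma L P|) &&
  Rleb (INR #|[set c in forb_cycles K G L | P \subset c.2]|)
       (INR K / C * npow n (1 - 3 * eps) * INR #|Gamma L P|).

Definition bad_pairs n (K : nat) (C eps : R) (G : {set 'I_n * 'I_n * 'I_n})
  (L : {set 'I_n * 'I_n}) (Y' : {set 'I_n}) : {set {set 'I_n}} :=
  [set P : {set 'I_n} | [&& P \subset Y', #|P| == 2 & ~~ good_pair K C eps G L P]].

Definition good_triple n (eps : R) (L : {set 'I_n * 'I_n}) (T : {set 'I_n}) : bool :=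
  Rleb (npow n (1 - 3 * eps)) (INR #|Gamma L T|).

Definition bad_triples n (eps : R) (L : {set 'I_n * 'I_n}) (Y' : {set 'I_n}) :
  {set {set 'I_n}} :=
  [set T : {set 'I_n} | [&& T \subset Y', #|T| == 3 & ~~ good_triple eps L T]].

From Pilot Require Import Defs.
From Stdlib Require Import Reals Lra Psatz Classical.
From mathcomp Require Import all_boot.
From mathcomp Require Import Rstruct.

(* The set Y' is the L-neighbourhood N(x) of a single vertex
   x of X, found by averaging over x.  Write a = n^(1-eps), t = a/4 and give each x the
   potential  phi(x) = C(|N(x)|,2) - (C/400) #bad pairs in N(x)
                                  - (C/(200(t-2))) #bad triples in N(x).
   If phi(x) > t^2/2 then N(x) satisfies all three conclusions ([good_vertex]).
   Averaging works because
   - sum_x C(|N(x)|,2) is at least quadratic in the average degree D = |L|/n = C a/2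
     (tangent-line bound [binom2_tangent]);
   - by double counting, sum_x #bad S in N(x) = sum over bad S of |Gamma(S)|
     ([sum_subsets_in_nbhd]); a bad pair has |Gamma| < n^(1-2eps) or many forbidden
     4-cycles through it, and each forbidden 4-cycle passes through exactly one pair,
     which bounds the pair sum by n a^2/2 + C n a^2; a bad triple has |Gamma| < n^(1-3eps),
     which bounds the triple sum by n a^3/6;
   - for a >= 16 (i.e. n >= 256) these bounds force sum_x phi(x) > n t^2/2
     ([total_potential_large]). *)

Set Implicit Arguments.
Unset Strict Implicit.
Unset Printing Implicit Defensive.

Lemma card_sep_sum (J : finType) (B : {set J}) (P : pred J) :
  #|[set j in B | P j]| = \sum_(j in B) (P j : nat).
Proof.
rewrite -sum1_card big_mkcond /= [RHS]big_mkcond /=.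
by apply: eq_bigr => j _; rewrite !inE; case: (j \in B); case: (P j).
Qed.

Lemma double_count (I J : finType) (A : {set I}) (B : {set J}) (rel : I -> J -> bool) :
  \sum_(i in A) #|[set j in B | rel i j]| = \sum_(j in B) #|[set i in A | rel i j]|.
Proof.
under eq_bigr do rewrite card_sep_sum.
by rewrite exchange_big /=; apply: eq_bigr => j _; rewrite card_sep_sum.
Qed.

Section Neighbourhoods.
Variables (n : nat) (L : {set 'I_n * 'I_n}).

Definition nbhd (x : 'I_n) : {set 'I_n} := [set y | (x, y) \in L].

Lemma Gamma_nbhd (S : {set 'I_n}) : Gamma L S = [set x in setT | S \subset nbhd x].
Proof.
apply/setP => x; rewrite !inE; apply/forallP/subsetP.
- by move=> h y yS; rewrite inE; move: (h y); rewrite yS.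
- by move=> h y; apply/implyP => yS; move: (h y yS); rewrite inE.
Qed.

Lemma sum_subsets_in_nbhd (F : {set {set 'I_n}}) :
  \sum_(x in setT) #|[set S in F | S \subset nbhd x]| = \sum_(S in F) #|Gamma L S|.
Proof. by rewrite double_count; apply: eq_bigr => S _; rewrite Gamma_nbhd. Qed.

Lemma sum_card_nbhd : \sum_(x in setT) #|nbhd x| = #|L|.
Proof.
rewrite -sum1_card (eq_bigl (fun p => p \in L)) //.
rewrite (partition_big fst (fun x => x \in setT)) //=.
apply: eq_bigr => x _; rewrite -sum1_card.
rewrite (reindex_onto (fun y => (x, y)) snd) /=; last by case=> x' y /andP[_ /= /eqP ->].
by apply: eq_bigl => y; rewrite inE !eqxx !andbT.
Qed.
End Neighbourhoods.

Section BadSets.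
Variables (n K : nat) (C eps : R) (G : {set 'I_n * 'I_n * 'I_n}) (L : {set 'I_n * 'I_n}).

Lemma bad_pairs_sub (Y' : {set 'I_n}) :
  bad_pairs K C eps G L Y' = [set P in bad_pairs K C eps G L setT | P \subset Y'].
Proof. by apply/setP => P; rewrite !inE subsetT /= andbC. Qed.

Lemma bad_triples_sub (Y' : {set 'I_n}) :
  bad_triples eps L Y' = [set T in bad_triples eps L setT | T \subset Y'].
Proof. by apply/setP => T; rewrite !inE subsetT /= andbC. Qed.

Lemma card_bad_pairs_le : #|bad_pairs K C eps G L setT| <= 'C(n, 2).
Proof.
rewrite -[X in 'C(X, 2)]card_ord -card_draws; apply: subset_leq_card.
by apply/subsetP => P; rewrite !inE => /and3P[].
Qed.

Lemma card_bad_triples_le : #|bad_triples eps L setT| <= 'C(n, 3).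
Proof.
rewrite -[X in 'C(X, 3)]card_ord -card_draws; apply: subset_leq_card.
by apply/subsetP => T; rewrite !inE => /and3P[].
Qed.

Definition forb_through (P : {set 'I_n}) : nat :=
  #|[set c in forb_cycles K G L | P \subset c.2]|.

(* A 4-cycle has exactly two Y-vertices, so it passes through at most one pair of F. *)
Lemma sum_forb_through (F : {set {set 'I_n}}) :
  {in F, forall P : {set 'I_n}, #|P| = 2} -> \sum_(P in F) forb_through P <= #|forb_cycles K G L|.
Proof.
move=> F2; rewrite /forb_through double_count -sum1_card; apply: leq_sum => c.
rewrite inE => /and3P[/andP[_ /eqP c2] _ _].
rewrite -(cards1 c.2); apply: subset_leq_card; apply/subsetP => P.
by rewrite !inE => /andP[PF Pc]; rewrite eqEcard Pc c2 F2.
Qed.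
End BadSets.

Local Open Scope R_scope.

Lemma INR_sum (I : finType) (P : pred I) (F : I -> nat) :
  INR (\sum_(i | P i) F i) = \big[Rplus/0]_(i | P i) INR (F i).
Proof. by apply: (big_morph INR) => //; exact: plus_INR. Qed.

Lemma Rsum_le (I : finType) (P : pred I) (F1 F2 : I -> R) :
  (forall i, P i -> F1 i <= F2 i) ->
  \big[Rplus/0]_(i | P i) F1 i <= \big[Rplus/0]_(i | P i) F2 i.
Proof. by move=> h; apply: big_ind2 => //; [exact: Rle_refl | move=> *; exact: Rplus_le_compat]. Qed.

Lemma Rsum_const (I : finType) (A : {set I}) (c : R) :
  \big[Rplus/0]_(i in A) c = INR #|A| * c.
Proof.
rewrite big_const; elim: #|A| => [|k IH]; first by rewrite /=; ring.
by rewrite iterS IH S_INR; ring.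
Qed.

(* Linearity of real sums.  The library lemmas state these for the monoid-law versions of
   + and *; restating them with Rplus and Rmult keeps the arithmetic tactics applicable. *)
Lemma Rsum_add (I : finType) (P : pred I) (F1 F2 : I -> R) :
  \big[Rplus/0]_(i | P i) (F1 i + F2 i)
    = \big[Rplus/0]_(i | P i) F1 i + \big[Rplus/0]_(i | P i) F2 i.
Proof. by rewrite big_split. Qed.

Lemma Rsum_scale (I : finType) (P : pred I) (c : R) (F : I -> R) :
  \big[Rplus/0]_(i | P i) (c * F i) = c * \big[Rplus/0]_(i | P i) F i.
Proof. by rewrite big_distrr. Qed.

Lemma exists_term_above (I : finType) (A : {set I}) (F : I -> R) (c : R) :
  INR #|A| * c < \big[Rplus/0]_(i in A) F i -> exists2 i, i \in A & c < F i.
Proof.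
move=> hsum; apply: NNPP => none; apply: (Rlt_not_le _ _ hsum).
rewrite -Rsum_const; apply: Rsum_le => i iA.
by apply: Rnot_lt_le => hi; apply: none; exists i.
Qed.

Lemma binom2_INR d : INR 'C(d, 2) * 2 = INR d * (INR d - 1).
Proof.
case: d => [|m]; first by rewrite /=; ring.
rewrite (_ : 2 = INR 2`!) // -mult_INR multE bin_ffact ffactnS ffactn1 -multE.
by rewrite mult_INR (_ : m.+1.-1 = m) // S_INR; ring.
Qed.

Lemma binom3_INR d : (2 <= d)%N -> 3 * INR 'C(d, 3) = (INR d - 2) * INR 'C(d, 2).
Proof.
move=> hd; rewrite (_ : 3 = INR 3); last by rewrite /=; ring.
rewrite -mult_INR multE mul_bin_left -multE.
by rewrite mult_INR minus_INR //; apply/leP.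
Qed.

Lemma binom2_le d : INR 'C(d, 2) <= INR d * INR d / 2.
Proof. have := binom2_INR d; have := pos_INR d; nra. Qed.

Lemma binom3_le d : INR 'C(d, 3) <= INR d * INR d * INR d / 6.
Proof.
have d0 := pos_INR d; have d3 : 0 <= INR d * INR d * INR d by nra.
case: (leqP 2 d) => hd; last by rewrite bin_small ?(leq_trans hd) //=; lra.
have := binom3_INR hd; have := binom2_le d; have := pos_INR 'C(d, 2); nra.
Qed.

Lemma npow_pos n x : 0 < npow n x.
Proof. exact: exp_pos. Qed.

Section BadPairGamma.
Variables (n K : nat) (C eps : R) (G : {set 'I_n * 'I_n * 'I_n}) (L : {set 'I_n * 'I_n}).
Hypothesis C_pos : 0 < C.

Let m2 := npow n (1 - 2 * eps).
Let m3 := npow n (1 - 3 * eps).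
Let BP := bad_pairs K C eps G L setT.
Let fo := forb_through K G L.

Lemma bad_pairP P : P \in BP ->
  INR #|Gamma L P| < m2 \/ INR K / C * m3 * INR #|Gamma L P| < INR (fo P).
Proof.
rewrite !inE => /and3P[_ _]; rewrite /good_pair /Defs.Rleb.
case: Rle_dec => [large_Gamma | small_Gamma]; last by left; apply: Rnot_le_lt.
by case: Rle_dec => // many_forb _; right; apply: Rnot_le_lt.
Qed.

(* Uniform bound on |Gamma(P)| for bad P; the case K = 0 uses that then no forbidden
   4-cycle exists at all. *)
Lemma bad_pair_Gamma_le P : P \in BP -> (K = 0%N -> fo P = 0%N) ->
  INR #|Gamma L P| <= m2 + C / (INR K * m3) * INR (fo P).
Proof.
move=> /bad_pairP bad fo0.
set g := INR #|Gamma L P| in bad *; set f := INR (fo P) in bad *.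
have m3_pos : 0 < m3 by apply: npow_pos.
case: (posnP K) => [K_eq0 | /ltP/lt_0_INR K_pos].
  have f_eq0 : f = 0 by rewrite /f fo0.
  rewrite f_eq0 Rmult_0_r Rplus_0_r; rewrite f_eq0 K_eq0 /= in bad; lra.
have slope_pos : 0 < C / (INR K * m3) by apply: Rdiv_lt_0_compat; nra.
have f0 : 0 <= f by apply: pos_INR.
case: bad => [small_Gamma | many_forb]; first nra.
have : g < C / (INR K * m3) * f.
  apply: (Rmult_lt_reg_l (INR K / C * m3)); first by apply: Rmult_lt_0_compat; [apply: Rdiv_lt_0_compat|].
  by rewrite -Rmult_assoc (_ : INR K / C * m3 * (C / (INR K * m3)) = 1); [lra | field; lra].
have : 0 <= m2 by apply: Rlt_le; apply: npow_pos.
lra.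
Qed.

Lemma sum_Gamma_bad_pairs (M : R) : 0 <= M -> INR #|forb_cycles K G L| <= INR K * M ->
  INR (\sum_(P in BP) #|Gamma L P|) <= INR n * INR n / 2 * m2 + C / m3 * M.
Proof.
move=> M0 few_forb.
have m3_pos : 0 < m3 by apply: npow_pos.
have no_forb : K = 0%N -> #|forb_cycles K G L| = 0%N.
  move=> K_eq0; apply/eqP; rewrite -leqn0; apply/leP; apply: INR_le.
  by move: few_forb; rewrite K_eq0 /= Rmult_0_l.
have fo0 P : K = 0%N -> fo P = 0%N.
  move/no_forb => FC0; apply/eqP; rewrite -leqn0 -FC0; apply: subset_leq_card.
  by apply/subsetP => c; rewrite inE => /andP[].
rewrite INR_sum; apply: Rle_trans (Rsum_le (fun P bad => bad_pair_Gamma_le bad (fo0 P))) _.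
rewrite Rsum_add Rsum_const Rsum_scale -INR_sum.
apply: Rplus_le_compat.
  apply: Rmult_le_compat_r; first by apply: Rlt_le; apply: npow_pos.
  apply: Rle_trans (binom2_le n); apply: le_INR; apply/leP; exact: card_bad_pairs_le.
have sum_fo : (\sum_(P in BP) fo P <= #|forb_cycles K G L|)%N.
  by apply: sum_forb_through => P; rewrite !inE => /and3P[_ /eqP].
case: (posnP K) => [K_eq0 | /ltP/lt_0_INR K_pos].
  rewrite K_eq0 /= Rmult_0_l /Rdiv Rinv_0 Rmult_0_r Rmult_0_l.
  by apply: Rmult_le_pos => //; apply: Rmult_le_pos; [lra | apply: Rlt_le; apply: Rinv_0_lt_compat].
apply: Rle_trans (_ : C / (INR K * m3) * (INR K * M) <= _).
  apply: Rmult_le_compat_l; first by apply: Rlt_le; apply: Rdiv_lt_0_compat; nra.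
  by apply: Rle_trans few_forb; apply: le_INR; apply/leP; exact: sum_fo.
by right; field; lra.
Qed.
End BadPairGamma.

(* A bad triple has fewer than n^(1-3eps) common neighbours. *)
Lemma sum_Gamma_bad_triples n eps (L : {set 'I_n * 'I_n}) :
  INR (\sum_(T in bad_triples eps L setT) #|Gamma L T|)
    <= INR n * INR n * INR n / 6 * npow n (1 - 3 * eps).
Proof.
rewrite INR_sum; apply: Rle_trans (_ : \big[Rplus/0]_(T in bad_triples eps L setT)
    npow n (1 - 3 * eps) <= _).
  apply: Rsum_le => T; rewrite !inE => /and3P[_ _]; rewrite /good_triple /Defs.Rleb.
  by case: Rle_dec => // small _; apply: Rlt_le; apply: Rnot_le_lt.
rewrite Rsum_const; apply: Rmult_le_compat_r; first by apply: Rlt_le; apply: npow_pos.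
apply: Rle_trans (binom3_le n); apply: le_INR; apply/leP; exact: card_bad_triples_le.
Qed.

Lemma binom2_tangent (D : R) r : D * INR r - D * D / 2 - INR r / 2 <= INR 'C(r, 2).
Proof. have := binom2_INR r; have := Rle_0_sqr (INR r - D); rewrite /Rsqr; nra. Qed.

Lemma good_vertex (C t : R) (r : nat) (P T : R) : 0 < C -> 2 < t -> 0 <= P -> 0 <= T ->
  t * t / 2 < INR 'C(r, 2) - C / 400 * P - C / (200 * (t - 2)) * T ->
  [/\ t <= INR r, P <= 400 / C * INR 'C(r, 2) & T <= 600 / C * INR 'C(r, 3)].
Proof.
move=> C_pos t_gt2 P0 T0 large.
have w_pos : 0 < C / (200 * (t - 2)) by apply: Rdiv_lt_0_compat; lra.
have uP0 : 0 <= C / 400 * P by apply: Rmult_le_pos => //; lra.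
have wT0 : 0 <= C / (200 * (t - 2)) * T by apply: Rmult_le_pos => //; lra.
have tt0 : 0 <= t * t by nra.
have t_le_r : t <= INR r by have := binom2_INR r; have := pos_INR r; nra.
have r_ge2 : (2 <= r)%N.
  by apply/leP; apply: INR_le; rewrite (_ : INR 2 = 2); [lra | rewrite /=; ring].
have binom3_ge : (t - 2) * INR 'C(r, 2) <= 3 * INR 'C(r, 3).
  by rewrite binom3_INR //; apply: Rmult_le_compat_r; [apply: pos_INR | lra].
split => //.
  apply: (Rmult_le_reg_l (C / 400)); first lra.
  by rewrite -Rmult_assoc (_ : C / 400 * (400 / C) = 1); [lra | field; lra].
apply: (Rmult_le_reg_l (C / (200 * (t - 2)))) => //.
rewrite -Rmult_assoc (_ : C / (200 * (t - 2)) * (600 / C) = 3 / (t - 2)); last by field; lra.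
apply: Rle_trans (_ : INR 'C(r, 2) <= _); first lra.
apply: (Rmult_le_reg_l (t - 2)); first lra.
by rewrite (_ : (t - 2) * (3 / (t - 2) * INR 'C(r, 3)) = 3 * INR 'C(r, 3)); last by field; lra.
Qed.

(* The numerical heart of the averaging argument: with average degree D = C a / 2 and
   threshold t = a / 4, the total potential exceeds n * t^2 / 2 once a >= 16. *)
Lemma total_potential_large (C a nr SP ST : R) :
  1 <= C -> 16 <= a -> 0 < nr -> 0 <= SP -> 0 <= ST ->
  SP <= nr * a * a / 2 + C * nr * a * a -> ST <= nr * a * a * a / 6 ->
  nr * (a / 4 * (a / 4) / 2) <
    (C * a / 2 - 1 / 2) * (nr * (C * a / 2)) - nr * (C * a / 2 * (C * a / 2) / 2)
    - C / 400 * SP - C / (200 * (a / 4 - 2)) * ST.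
Proof.
move=> C1 a16 nr_pos SP0 ST0 SP_le ST_le.
set w := C / (200 * (a / 4 - 2)).
have w0 : 0 <= w by apply: Rlt_le; apply: Rdiv_lt_0_compat; lra.
have wa : w * a <= C / 25.
  apply: (Rmult_le_reg_r (200 * (a / 4 - 2))); first lra.
  rewrite (_ : w * a * (200 * (a / 4 - 2)) = C * a); last by rewrite /w; field; lra.
  nra.
set X := nr * a * a.
have X_pos : 0 < X by rewrite /X; apply: Rmult_lt_0_compat; nra.
have wST : w * ST <= C * X / 150.
  apply: Rle_trans (_ : w * (X * a / 6) <= _).
    by apply: Rmult_le_compat_l => //; rewrite /X; lra.
  have := Rmult_le_compat_r X _ _ (Rlt_le _ _ X_pos) wa; lra.
have SPw : C / 400 * SP <= C / 400 * (X / 2 + C * X).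
  by apply: Rmult_le_compat_l; [lra | rewrite /X; lra].
have nra_le : nr * a * 16 <= X by rewrite /X; apply: Rmult_le_compat_l; nra.
have CX : X <= C * X by nra.
have CCX : C * X <= C * (C * X) by nra.
have Cnra : C * (nr * a) * 16 <= C * X by nra.
have -> : (C * a / 2 - 1 / 2) * (nr * (C * a / 2)) - nr * (C * a / 2 * (C * a / 2) / 2)
          = C * (C * X) / 8 - C * (nr * a) / 4 by rewrite /X; field.
have -> : nr * (a / 4 * (a / 4) / 2) = X / 32 by rewrite /X; field.
lra.
Qed.

(* Total number of (neighbourhood, bad pair inside it) incidences: each bad pair P is
   counted |Gamma(P)| times, which is small on average by [sum_Gamma_bad_pairs]. *)
Lemma sum_bad_pairs_nbhd n K C eps (G : {set 'I_n * 'I_n * 'I_n}) (L : {set 'I_n * 'I_n})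
    (a b : R) :
  0 < C -> 0 < a -> 0 < b ->
  npow n (1 - 2 * eps) * INR n = a * a ->
  npow n (1 - 3 * eps) * (INR n * INR n) = a * a * a ->
  b * (INR n * INR n * INR n) <= a * a * a * a ->
  INR #|forb_cycles K G L| <= INR K * (INR n * INR n * a * b) ->
  \big[Rplus/0]_(x in setT) INR #|bad_pairs K C eps G L (nbhd L x)|
    <= INR n * a * a / 2 + C * INR n * a * a.
Proof.
move=> C_pos a_pos b_pos m2_eq m3_eq b_le few_forb.
have nr0 := pos_INR n; set nr := INR n in nr0 m2_eq m3_eq b_le few_forb *.
have m3_pos : 0 < npow n (1 - 3 * eps) by apply: npow_pos.
rewrite -INR_sum; under eq_bigr do rewrite bad_pairs_sub.
rewrite sum_subsets_in_nbhd.
have M0 : 0 <= nr * nr * a * b by apply: Rmult_le_pos; nra.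
apply: Rle_trans (sum_Gamma_bad_pairs eps C_pos M0 few_forb) _.
apply: Rplus_le_compat; first by right; rewrite -/nr; nra.
apply: (Rmult_le_reg_r (a * a * a)); first by repeat apply: Rmult_lt_0_compat.
rewrite -{1}m3_eq (_ : C / npow n (1 - 3 * eps) * (nr * nr * a * b) *
  (npow n (1 - 3 * eps) * (nr * nr)) = C * a * nr * (b * (nr * nr * nr))); last by field; lra.
rewrite (_ : C * nr * a * a * (a * a * a) = C * a * nr * (a * a * a * a)); last by ring.
by apply: Rmult_le_compat_l b_le; apply: Rmult_le_pos; nra.
Qed.

(* Likewise each bad triple T is counted |Gamma(T)| < n^(1-3 eps) times. *)
Lemma sum_bad_triples_nbhd n eps (L : {set 'I_n * 'I_n}) (a : R) :
  npow n (1 - 3 * eps) * (INR n * INR n) = a * a * a ->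
  \big[Rplus/0]_(x in setT) INR #|bad_triples eps L (nbhd L x)| <= INR n * a * a * a / 6.
Proof.
move=> m3_eq; rewrite -INR_sum; under eq_bigr do rewrite bad_triples_sub.
rewrite sum_subsets_in_nbhd; apply: Rle_trans (sum_Gamma_bad_triples eps L) _.
right; transitivity (INR n * (npow n (1 - 3 * eps) * (INR n * INR n)) / 6); first by field.
by rewrite m3_eq; field.
Qed.

(* Averaging over x in X: the total potential of the neighbourhoods exceeds n t^2 / 2
   with t = a / 4, so some neighbourhood has potential above t^2 / 2 and is good. *)
Lemma exists_good_neighbourhood n K C eps (G : {set 'I_n * 'I_n * 'I_n})
    (L : {set 'I_n * 'I_n}) (a b : R) :
  1 <= C -> 16 <= a -> 0 < b -> 0 < INR n ->
  npow n (1 - 2 * eps) * INR n = a * a ->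
  npow n (1 - 3 * eps) * (INR n * INR n) = a * a * a ->
  b * (INR n * INR n * INR n) <= a * a * a * a ->
  INR #|L| = C / 2 * (INR n * a) ->
  INR #|forb_cycles K G L| <= INR K * (INR n * INR n * a * b) ->
  exists x, [/\ a / 4 <= INR #|nbhd L x|,
    INR #|bad_pairs K C eps G L (nbhd L x)| <= 400 / C * INR 'C(#|nbhd L x|, 2) &
    INR #|bad_triples eps L (nbhd L x)| <= 600 / C * INR 'C(#|nbhd L x|, 3)].
Proof.
move=> C1 a16 b_pos n_pos m2_eq m3_eq b_le L_card few_forb.
have C_pos : 0 < C by lra.
have a_pos : 0 < a by lra.
have pairs_total := sum_bad_pairs_nbhd C_pos a_pos b_pos m2_eq m3_eq b_le few_forb.
have triples_total := sum_bad_triples_nbhd L m3_eq.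
set nr := INR n in n_pos L_card pairs_total triples_total.
set bp := fun x => INR #|bad_pairs K C eps G L (nbhd L x)| in pairs_total.
set bt := fun x => INR #|bad_triples eps L (nbhd L x)| in triples_total.
set D := C * a / 2; set t := a / 4; set w := C / (200 * (t - 2)).
set deg := fun x => INR #|nbhd L x|.
(* Tangent-line lower bound for the potential, summed using sum deg = |L| = n D. *)
set affine := fun x =>
  ((D - 1 / 2) * deg x + - (D * D / 2)) + (- (C / 400) * bp x + - w * bt x).
have sum_affine : \big[Rplus/0]_(x in setT) affine x =
    (D - 1 / 2) * INR #|L| + - (nr * (D * D / 2))
    + (- (C / 400) * \big[Rplus/0]_(x in setT) bp x + - w * \big[Rplus/0]_(x in setT) bt x).
  rewrite !Rsum_add !Rsum_scale Rsum_const cardsT card_ord.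
  by rewrite /deg -INR_sum sum_card_nbhd -/nr; ring.
set phi := fun x => INR 'C(#|nbhd L x|, 2) - C / 400 * bp x - w * bt x.
have potential : nr * (t * t / 2) < \big[Rplus/0]_(x in setT) phi x.
  have SP0 : 0 <= \big[Rplus/0]_(x in setT) bp x by rewrite /bp -INR_sum; apply: pos_INR.
  have ST0 : 0 <= \big[Rplus/0]_(x in setT) bt x by rewrite /bt -INR_sum; apply: pos_INR.
  apply: Rlt_le_trans (total_potential_large C1 a16 n_pos SP0 ST0 pairs_total triples_total) _.
  apply: Rle_trans (_ : \big[Rplus/0]_(x in setT) affine x <= _).
    by rewrite sum_affine L_card; right; rewrite /D /w /t; field; lra.
  apply: Rsum_le => x _; rewrite /affine /phi /deg.
  have := binom2_tangent D #|nbhd L x|; lra.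
have [x _ phi_x] : exists2 x, x \in setT & t * t / 2 < phi x.
  by apply: exists_term_above; rewrite cardsT card_ord.
exists x; apply: good_vertex => //; try apply: pos_INR.
  by rewrite /t; lra.
Qed.

Lemma npow_mul n x y : npow n x * npow n y = npow n (x + y).
Proof. by rewrite /npow Rpower_plus. Qed.

Lemma npow_one n : (0 < n)%N -> npow n 1 = INR n.
Proof. by move=> /ltP/lt_0_INR n_pos; rewrite /npow Rpower_1. Qed.

Lemma npow_le n x y : (0 < n)%N -> x <= y -> npow n x <= npow n y.
Proof. by move=> /ltP/le_INR n_ge1 xy; apply: Rle_Rpower. Qed.

Lemma npow_scales n eps : (256 <= n)%N -> eps <= 1 / 5 ->
  let a := npow n (1 - eps) in let b := npow n (1 / 5) in let nr := INR n in
  [/\ npow n (2 - eps) = nr * a, npow n (1 - 2 * eps) * nr = a * a,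
      npow n (1 - 3 * eps) * (nr * nr) = a * a * a,
      npow n (3 + 1 / 5 - eps) = nr * nr * a * b &
      [/\ b * (nr * nr * nr) <= a * a * a * a, 16 <= a & 256 <= nr]].
Proof.
move=> n256 eps_le a b nr.
have n_pos : (0 < n)%N by apply: leq_trans n256.
have nrE : nr = npow n 1 by rewrite npow_one.
have nr256 : 256 <= nr.
  by rewrite /nr (_ : 256 = INR 256); [apply: le_INR; apply/leP | rewrite /=; ring].
rewrite /a /b nrE !npow_mul.
split; try by congr npow; ring.
split; [by apply: npow_le => //; lra | | by rewrite -nrE].
have a_sq : nr <= a * a by rewrite /a nrE npow_mul; apply: npow_le => //; lra.
have : 0 < a by apply: npow_pos.
rewrite -/a; nra.
Qed.

Local Close Scope R_scope.

Theorem lemma3p2 (VH : finType) (EH : {set {set VH}}) (HH : uniform3 EH)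
  (eps C : R) (Heps : Rle eps (1/5)) (HC : Rle 1 C) :
  exists n0 : nat, forall n : nat, n0 <= n ->
  forall (G : {set 'I_n * 'I_n * 'I_n}) (L : {set 'I_n * 'I_n}),
    INR #|L| = Rmult (Rdiv C 2) (npow n (2 - eps)) ->
    Rle (INR #|forb_cycles (KH VH) G L|) (INR (KH VH) * npow n (3 + 1/5 - eps)) ->
    exists Y' : {set 'I_n},
      Rle (npow n (1 - eps) / 4) (INR #|Y'|) /\
      Rle (INR #|bad_pairs (KH VH) C eps G L Y'|) (400 / C * INR 'C(#|Y'|, 2)) /\
      Rle (INR #|bad_triples eps L Y'|) (600 / C * INR 'C(#|Y'|, 3)).
Proof.
exists 256 => n n256 G L L_card few_forb.
have [deg_eq m2_eq m3_eq forb_eq [b_le a16 nr256]] := npow_scales n256 Heps.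
rewrite deg_eq in L_card; rewrite forb_eq in few_forb.
have n_pos : Rlt 0 (INR n) by apply: Rlt_le_trans nr256; apply: IZR_lt.
have b_pos := npow_pos n (1 / 5).
have [x [deg_x pairs_x triples_x]] :=
  exists_good_neighbourhood HC a16 b_pos n_pos m2_eq m3_eq b_le L_card few_forb.
by exists (nbhd L x).
Qed.
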